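(* Let $(X,d)$ be a metric space with $|X|\ge 2$ and let $\tilde x$ be a $d$-statistically convergent sequence of points of $X$. Let $\tilde x'$ be a subsequence of $\tilde x$ with the following property: whenever $\tilde y$ is a sequence in $X$ statistically equivalent to $\tilde x$ and $\tilde y'$ is a subsequence of $\tilde y$ with $K_{\tilde y'}=K_{\tilde x'}$, the subsequence $\tilde y'$ is $d$-statistically convergent. Then $\limsup_{n\to\infty}\frac{|K_{\tilde x'}(n)|}{n}>0$.
   Context: For a subsequence $\tilde z'=(z_{n(k)})$ of a sequence $(z_n)$ (with $(n(k))$ infinite and strictly increasing), $K_{\tilde z'}=\{n(k):k\in\mathbb N\}$ and $K_{\tilde z'}(n)=\{m\in K_{\tilde z'}:m\le n\}$. A sequence $(z_k)$ is $d$-statistically convergent if there is $a\in X$ with $\lim_{n\to\infty}\frac1n|\{k\le n: d(z_k,a)\ge\epsilon\}|=0$ for all $\epsilon>0$; subsequences are regarded as sequences indexed by $k$. A set $M\subseteq\mathbb N$ is statistical dense if $\lim_{n\to\infty}|\{m\in M:m\le n\}|/n=1$; sequences $(x_n),(y_n)$ are statistically equivalent if $x_n=y_n$ for all $n$ in some statistical dense $M$. *)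

From Stdlib Require Import Reals Lra Lia List Classical ClassicalDescription.
From Coquelicot Require Import Coquelicot.
Open Scope R_scope.

Definition is_metric {X : Type} (d : X -> X -> R) : Prop :=
  (forall x y, 0 <= d x y) /\
  (forall x y, d x y = 0 <-> x = y) /\
  (forall x y, d x y = d y x) /\
  (forall x y z, d x z <= d x y + d y z).

(* Number of indices k in {0, ..., n-1} satisfying the (arbitrary) predicate P.
   Sequences are indexed by nat starting at 0, so the first n terms are
   indices 0..n-1. *)
Definition count_lt (P : nat -> Prop) (n : nat) : nat :=
  length (filter (fun k => if excluded_middle_informative (P k) then true else false)
                 (seq 0 n)).

Definition stat_convergent {X : Type} (d : X -> X -> R) (z : nat -> X) : Prop :=
  exists a : X, forall eps : R, 0 < eps ->
    is_lim_seq (fun n => INR (count_lt (fun k => eps <= d (z k) a) n) / INR n) 0.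

Definition stat_dense (M : nat -> Prop) : Prop :=
  is_lim_seq (fun n => INR (count_lt M n) / INR n) 1.

Definition stat_equiv {X : Type} (x y : nat -> X) : Prop :=
  exists M : nat -> Prop, stat_dense M /\ forall n, M n -> x n = y n.

(* A subsequence is given by a strictly increasing index map nk; the
   subsequence itself is (fun k => z (nk k)). *)
Definition strictly_increasing (nk : nat -> nat) : Prop :=
  forall i j, (i < j)%nat -> (nk i < nk j)%nat.

(* K_{z'} = range of the index map. *)
Definition Kset (nk : nat -> nat) : nat -> Prop := fun m => exists k, nk k = m.

(** The density of [K_{x'}] along the whole sequence is a ratio in [[0,1]], so a
    non-positive [limsup] means it tends to [0]; then [K_{x'}] has density zero and
    one may overwrite [x] on it at will without leaving its statistical equivalence
    class.  Overwriting it so that the subsequence alternates between two distinct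
    points [a] and [b] contradicts the hypothesis: every candidate limit [c] is at
    distance at least [d a b / 2] from [a] or from [b], hence from at least half of
    the terms. *)

From Stdlib Require Import Reals Lra Lia List Classical ClassicalDescription.
From Coquelicot Require Import Coquelicot.
Open Scope R_scope.

Definition density_upto (P : nat -> Prop) (n : nat) : R := INR (count_lt P n) / INR n.

Lemma count_lt_S_in (P : nat -> Prop) n : P n -> count_lt P (S n) = S (count_lt P n).
Proof.
  intro Pn. unfold count_lt. rewrite seq_S, filter_app, length_app. simpl.
  destruct (excluded_middle_informative (P n)); [simpl; lia | contradiction].
Qed.

Lemma count_lt_S_out (P : nat -> Prop) n : ~ P n -> count_lt P (S n) = count_lt P n.
Proof.
  intro nPn. unfold count_lt. rewrite seq_S, filter_app, length_app. simpl.
  destruct (excluded_middle_informative (P n)); [contradiction | simpl; lia].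
Qed.

Lemma count_lt_mono (P Q : nat -> Prop) n :
  (forall k, P k -> Q k) -> (count_lt P n <= count_lt Q n)%nat.
Proof.
  intro PQ. induction n as [|n IH]; [unfold count_lt; simpl; lia|].
  destruct (classic (P n)) as [Pn|nPn].
  - rewrite (count_lt_S_in P n Pn), (count_lt_S_in Q n (PQ n Pn)). lia.
  - rewrite (count_lt_S_out P n nPn).
    destruct (classic (Q n)) as [Qn|nQn].
    + rewrite (count_lt_S_in Q n Qn); lia.
    + rewrite (count_lt_S_out Q n nQn); lia.
Qed.

Lemma count_lt_compl (P : nat -> Prop) n :
  (count_lt P n + count_lt (fun k => ~ P k) n)%nat = n.
Proof.
  induction n as [|n IH]; [unfold count_lt; simpl; lia|].
  destruct (classic (P n)) as [Pn|nPn].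
  - rewrite (count_lt_S_in P n Pn), (count_lt_S_out (fun k => ~ P k) n); [lia|tauto].
  - rewrite (count_lt_S_out P n nPn), (count_lt_S_in (fun k => ~ P k) n nPn); lia.
Qed.

Lemma count_lt_even n : count_lt Nat.Even (2 * n) = n.
Proof.
  induction n as [|n IH]; [unfold count_lt; simpl; lia|].
  replace (2 * S n)%nat with (S (S (2 * n))) by lia.
  rewrite count_lt_S_out, count_lt_S_in; [lia | exists n; lia |].
  intros [m Hm]; lia.
Qed.

Lemma count_lt_odd n : count_lt (fun k => ~ Nat.Even k) (2 * n) = n.
Proof. pose proof (count_lt_compl Nat.Even (2 * n)) as C. rewrite count_lt_even in C. lia. Qed.

Lemma density_upto_ge0 (P : nat -> Prop) n : 0 <= density_upto P n.
Proof.
  unfold density_upto. destruct n as [|n].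
  - simpl. unfold Rdiv. rewrite Rinv_0. lra.
  - apply Rdiv_le_0_compat; [apply pos_INR | apply lt_0_INR; lia].
Qed.

Lemma density_upto_compl (P : nat -> Prop) n :
  density_upto (fun k => ~ P k) (S n) = 1 - density_upto P (S n).
Proof.
  unfold density_upto.
  pose proof (f_equal INR (count_lt_compl P (S n))) as C. rewrite plus_INR in C.
  assert (INR (S n) <> 0) by (apply not_0_INR; lia).
  replace (INR (count_lt (fun k => ~ P k) (S n)))
    with (INR (S n) - INR (count_lt P (S n))) by lra.
  field; assumption.
Qed.

Lemma is_lim_seq_0_of_LimSup_nonpos (u : nat -> R) :
  (forall n, 0 <= u n) -> ~ Rbar_lt 0 (LimSup_seq u) -> is_lim_seq u 0.
Proof.
  intros u_ge0 not_pos. unfold LimSup_seq in not_pos.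
  destruct (ex_LimSup_seq u) as [[l| |] Hl]; simpl in not_pos, Hl.
  - apply is_lim_seq_spec. intro eps. destruct (Hl eps) as [_ [N HN]].
    exists N. intros n Hn. specialize (HN n Hn). specialize (u_ge0 n).
    rewrite Rminus_0_r, Rabs_right; lra.
  - tauto.
  - destruct (Hl 0) as [N HN]. specialize (HN N (le_n _)). specialize (u_ge0 N). lra.
Qed.

Lemma stat_dense_compl (P : nat -> Prop) :
  is_lim_seq (density_upto P) 0 -> stat_dense (fun k => ~ P k).
Proof.
  intro P0. unfold stat_dense. apply is_lim_seq_incr_1.
  apply is_lim_seq_ext with (u := fun n => 1 - density_upto P (S n)).
  { intro n. symmetry. apply density_upto_compl. }
  replace (Finite 1) with (Finite (1 - 0)) by (f_equal; ring).
  apply is_lim_seq_minus'; [apply is_lim_seq_const|].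
  exact (proj1 (is_lim_seq_incr_1 _ 0) P0).
Qed.

Lemma stat_equiv_of_eq_off {X : Type} (P : nat -> Prop) (x y : nat -> X) :
  is_lim_seq (density_upto P) 0 -> (forall m, ~ P m -> x m = y m) -> stat_equiv x y.
Proof. intros P0 xy. exists (fun m => ~ P m). split; [apply stat_dense_compl|]; assumption. Qed.

Lemma metric_far_from_one (X : Type) (d : X -> X -> R) (a b c : X) :
  is_metric d -> d a b / 2 <= d a c \/ d a b / 2 <= d b c.
Proof.
  intros [_ [_ [d_sym d_tri]]]. pose proof (d_tri a c b). pose proof (d_sym c b).
  destruct (Rle_or_lt (d a b / 2) (d a c)); [left | right]; lra.
Qed.

Lemma density_upto_half_on_parity (P : nat -> Prop) :
  (forall k, Nat.Even k -> P k) \/ (forall k, ~ Nat.Even k -> P k) ->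
  forall n, 1 / 2 <= density_upto P (2 * S n).
Proof.
  intros parity n.
  assert (half : (S n <= count_lt P (2 * S n))%nat).
  { destruct parity as [even_P | odd_P].
    - rewrite <- (count_lt_even (S n)) at 1. exact (count_lt_mono _ _ _ even_P).
    - rewrite <- (count_lt_odd (S n)) at 1. exact (count_lt_mono _ _ _ odd_P). }
  apply le_INR in half. pose proof (lt_0_INR (S n) ltac:(lia)).
  unfold density_upto. rewrite mult_INR. replace (INR 2) with 2 by (simpl; lra).
  apply (Rmult_le_reg_r (2 * INR (S n))); [lra|].
  unfold Rdiv at 2. rewrite Rmult_assoc, Rinv_l, Rmult_1_r by lra. lra.
Qed.

Lemma not_is_lim_seq_0_of_half_often (u : nat -> R) :
  (forall n, 1 / 2 <= u (2 * S n)%nat) -> ~ is_lim_seq u 0.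
Proof.
  intros half u0. apply is_lim_seq_spec in u0.
  destruct (u0 (mkposreal (1 / 2) ltac:(lra))) as [N HN]; simpl in HN.
  specialize (HN (2 * S N)%nat ltac:(lia)). specialize (half N).
  rewrite Rminus_0_r, Rabs_right in HN; lra.
Qed.

Lemma not_stat_convergent_alternating (X : Type) (d : X -> X -> R) (a b : X) (z : nat -> X) :
  is_metric d -> a <> b ->
  (forall k, Nat.Even k -> z k = a) -> (forall k, ~ Nat.Even k -> z k = b) ->
  ~ stat_convergent d z.
Proof.
  intros Hd ab z_even z_odd [c Hc].
  assert (dab_pos : 0 < d a b).
  { destruct Hd as [d_ge0 [d_eq0 _]].
    destruct (Rle_lt_or_eq_dec 0 (d a b) (d_ge0 a b)) as [|E]; [assumption|].
    exfalso. apply ab, d_eq0. now symmetry. }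
  assert (parity : (forall k, Nat.Even k -> d a b / 2 <= d (z k) c) \/
                    (forall k, ~ Nat.Even k -> d a b / 2 <= d (z k) c)).
  { destruct (metric_far_from_one X d a b c Hd) as [far_a | far_b]; [left | right];
      intros k Hk; [rewrite z_even | rewrite z_odd]; assumption. }
  apply (not_is_lim_seq_0_of_half_often _ (density_upto_half_on_parity _ parity)).
  apply Hc. lra.
Qed.

Lemma strictly_increasing_inj (nk : nat -> nat) :
  strictly_increasing nk -> forall i j, nk i = nk j -> i = j.
Proof.
  intros inc i j E. destruct (Nat.lt_trichotomy i j) as [lt|[eq|gt]]; [|assumption|].
  - apply inc in lt; lia.
  - apply inc in gt; lia.
Qed.

Section AlternateOnRange.

Variables (X : Type) (nk : nat -> nat) (a b : X) (x : nat -> X).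
Hypothesis nk_inc : strictly_increasing nk.

Definition alternate_on_range (m : nat) : X :=
  if excluded_middle_informative (exists k, nk k = m /\ Nat.Even k) then a
  else if excluded_middle_informative (Kset nk m) then b else x m.

Lemma alternate_on_range_even k : Nat.Even k -> alternate_on_range (nk k) = a.
Proof.
  intro ek. unfold alternate_on_range.
  destruct (excluded_middle_informative _) as [_|no]; [reflexivity|].
  exfalso. apply no. eauto.
Qed.

Lemma alternate_on_range_odd k : ~ Nat.Even k -> alternate_on_range (nk k) = b.
Proof.
  intro ok. unfold alternate_on_range.
  destruct (excluded_middle_informative _) as [[k' [E ek']]|_].
  - apply strictly_increasing_inj in E; [subst; contradiction | assumption].
  - destruct (excluded_middle_informative _) as [_|no]; [reflexivity|].
    exfalso. apply no. now exists k.
Qed.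

Lemma alternate_on_range_off m : ~ Kset nk m -> x m = alternate_on_range m.
Proof.
  intro off. unfold alternate_on_range.
  destruct (excluded_middle_informative _) as [[k [E _]]|_].
  - exfalso. apply off. now exists k.
  - destruct (excluded_middle_informative _); [contradiction | reflexivity].
Qed.

End AlternateOnRange.

Theorem theorem7 (X : Type) (d : X -> X -> R) (Hd : is_metric d)
  (H2 : exists a b : X, a <> b)
  (x : nat -> X) (Hx : stat_convergent d x)
  (nx : nat -> nat) (Hnx : strictly_increasing nx)
  (Hprop : forall (y : nat -> X), stat_equiv x y ->
             forall ny : nat -> nat, strictly_increasing ny ->
               (forall m, Kset ny m <-> Kset nx m) ->
               stat_convergent d (fun k => y (ny k))) :
  Rbar_lt 0 (LimSup_seq (fun n => INR (count_lt (Kset nx) n) / INR n)).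
Proof.
  apply NNPP. intro not_pos.
  assert (density0 : is_lim_seq (density_upto (Kset nx)) 0).
  { exact (is_lim_seq_0_of_LimSup_nonpos _ (density_upto_ge0 _) not_pos). }
  destruct H2 as [a [b ab]].
  set (y := alternate_on_range X nx a b x).
  assert (xy : stat_equiv x y).
  { exact (stat_equiv_of_eq_off _ x y density0 (alternate_on_range_off X nx a b x)). }
  apply (not_stat_convergent_alternating X d a b (fun k => y (nx k)) Hd ab).
  - exact (alternate_on_range_even X nx a b x).
  - exact (alternate_on_range_odd X nx a b x Hnx).
  - exact (Hprop y xy nx Hnx (fun m => iff_refl _)).
Qed.
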